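(* Let $n\ge 1$, let $\mathbf{X}=\{x_0,\dots,x_{n-1}\}$, and let $\pi$ be a linear transformation over $\mathbf{X}$. Then every unitary matrix $U$ of size $2^n\times 2^n$ has a unique (up to isomorphism) reduced and normalized linearly transformed QMDD (LTQMDD) respecting $\pi$, i.e., a unique reduced and normalized LTQMDD $(v,e,\pi)$ whose semantics is $U$.
   Context: Indices of vectors and matrices are $0$-based; a natural number $0\le i<2^n$ is identified with its $n$-bit Boolean vector $(b_0\cdots b_{n-1})_2$, where $b_k$ is the value of $x_k$ under the standard order $[x_0,\dots,x_{n-1}]$ (so $x_0$ is the most significant bit). Linear transformations. For $\mathbf{Y}\subseteq\mathbf{X}$, its linear combination is $\bigoplus_{x\in\mathbf{Y}}x$ (XOR). A set $\Pi$ of linear combinations is fully ranked if every $x\in\mathbf{X}$ is the XOR of some subset of $\Pi$. A linear transformation is a sequence $\pi=[\pi_0,\dots,\pi_{n-1}]$ whose entries are the $n$ elements of a fully ranked set of linear combinations. It induces a bijection $\pi:\{0,1\}^n\to\{0,1\}^n$ by $\pi(v)_i=\pi_i(v)$ (the value of the linear combination $\pi_i$ under the assignment $v$), hence a permutation of $\{0,\dots,2^n-1\}$. For a $2^n\times2^n$ matrix $U=(u_{i,j})$, the linearly transformed matrix $U^{\pi}$ is defined by $u^{\pi}_{i,j}=u_{\pi(i),\pi(j)}$ for $0\le i,j<2^n$. QMDDs. A QMDD is a rooted directed acyclic graph given by a root edge $e$ pointing to a root node $v$. Nodes are internal or terminal. Each internal node $v$ has an index $\mathrm{ind}(v)\in\{0,\dots,n-1\}$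 and four outgoing edges $e_0(v),e_1(v),e_2(v),e_3(v)$ to successors $v_0,v_1,v_2,v_3$; every edge (including the root edge) carries a complex weight $w(e)$. There is a single terminal node, labeled $1$, with index $n$ and no successors. Along every path from the root to the terminal, indices strictly increase. Semantics: for an edge $e$ pointing to node $v$ considered from level $j\le \mathrm{ind}(v)$, with $J_m$ the $m\times m$ all-ones matrix and $s=\mathrm{ind}(v)-j$: if $v$ is terminal, $M^j_{(v,e)}=w(e)\,J_{2^s}$; if $v$ is internal, $M^j_{(v,e)}=w(e)\,J_{2^s}\otimes\begin{bmatrix}M^{k}_{(v_0,e_0)}&M^{k}_{(v_1,e_1)}\\ M^{k}_{(v_2,e_2)}&M^{k}_{(v_3,e_3)}\end{bmatrix}$ with $k=\mathrm{ind}(v)+1$ (the four blocks correspond to row/column value of the variable at level $\mathrm{ind}(v)$: block $0$ = row $0$, column $0$; block $1$ = row $0$, column $1$; block $2$ = row $1$, column $0$; block $3$ = row $1$, column $1$). The matrix represented by the QMDD is $M^0_{(v,e)}$, a $2^n\times 2^n$ matrix. Reduced: two internal nodes are isomorphic if they have the same index and their corresponding outgoing edges point to the same nodes with the same weights. A QMDD is reduced if (RI) no two distinct internal nodes are isomorphic, and (RS) no internal node has all four outgoing edges pointing to the same node with the same weight. Normalized: for every internal node, the largest magnitude among the nonzero weights of its outgoing edges is $1$, and among the edges attaining that maximum magnitude, the leftmost one has weight exactly $1$. LTQMDDs. A linearly transformed QMDD is a triple $(v,e,\pi)$ consisting of a QMDD $(v,e)$ and a linear transformation $\pi$; it is said to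 respect $\pi$, and it is reduced/normalized if the QMDD $(v,e)$ is. Its semantics is the linearly transformed matrix $(M^0_{(v,e)})^{\pi}$ of the matrix represented by $(v,e)$. *)

From HB Require Import structures.
From mathcomp Require Import all_boot all_order all_algebra fingraph.
From mathcomp Require Import reals complex.
Set Implicit Arguments. Unset Strict Implicit. Unset Printing Implicit Defensive.
Import Order.TTheory GRing.Theory Num.Theory.
Local Open Scope ring_scope.

Lemma exp2_gt0 (n : nat) : (0 < 2 ^ n)%N.
Proof. by rewrite expn_gt0. Qed.

(* b_k = value of x_k in index i; x_0 is the most significant bit *)
Definition bits_of (n : nat) (i : 'I_(2 ^ n)) : 'I_n -> bool :=
  fun k => odd (i %/ 2 ^ (n - k.+1))%N.

(* the index whose Boolean vector is b (the bound 2^n always holds) *)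
Definition idx_of_bits (n : nat) (b : 'I_n -> bool) : 'I_(2 ^ n) :=
  insubd (Ordinal (exp2_gt0 n)) (\sum_(k < n) b k * 2 ^ (n - k.+1))%N.

(* A linear combination over X = {x_0..x_{n-1}} is given by its support
   Y : {set 'I_n}; its value under v is the XOR of the v k, k in Y. *)
Definition lc_eval (n : nat) (Y : {set 'I_n}) (v : 'I_n -> bool) : bool :=
  odd #|[set k in Y | v k]|.

(* pi = [pi_0, ..., pi_{n-1}] : entries are n (distinct) linear combinations
   forming a fully ranked set: every x_j is the XOR of a subset of them. *)
Definition lin_trans (n : nat) (pi : 'I_n -> {set 'I_n}) : Prop :=
  injective pi /\
  forall j : 'I_n, exists S : {set 'I_n},
    forall k : 'I_n, (k == j) = odd #|[set i in S | k \in pi i]|.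

Definition lt_vec (n : nat) (pi : 'I_n -> {set 'I_n}) (v : 'I_n -> bool)
  : 'I_n -> bool := fun i => lc_eval (pi i) v.

Definition lt_perm (n : nat) (pi : 'I_n -> {set 'I_n}) (i : 'I_(2 ^ n))
  : 'I_(2 ^ n) := idx_of_bits (lt_vec pi (bits_of i)).

Definition lt_mx (C : Type) (n : nat) (pi : 'I_n -> {set 'I_n})
  (U : 'M[C]_(2 ^ n)) : 'M[C]_(2 ^ n) :=
  \matrix_(i, j) U (lt_perm pi i) (lt_perm pi j).

(* Internal nodes form a finite type; the unique terminal node (index n) is
   represented by [None]; an edge is (target : option node, weight). *)
Record qmdd (n : nat) (C : Type) := Qmdd {
  qnode : finType;
  qind : qnode -> 'I_n;
  qsucc : qnode -> 'I_4 -> option qnode;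
  qwt : qnode -> 'I_4 -> C;
  qroot : option qnode;
  qrootw : C }.

Arguments qnode {n C}.
Arguments qind {n C Q} : rename.
Arguments qsucc {n C Q} : rename.
Arguments qwt {n C Q} : rename.
Arguments qroot {n C}.
Arguments qrootw {n C}.

Definition qindex (n : nat) (C : Type) (Q : qmdd n C) (o : option (qnode Q))
  : nat := if o is Some v then val (qind v) else n.

Definition qedge (n : nat) (C : Type) (Q : qmdd n C) : rel (qnode Q) :=
  fun u w => [exists k : 'I_4, qsucc u k == Some w].

(* well-formed QMDD: a rooted DAG (every internal node is reachable from the
   root node), indices strictly increase along edges, and (standard QMDD
   convention) edges of weight 0 point to the terminal node. *)
Definition qmdd_wf (n : nat) (C : nzRingType) (Q : qmdd n C) : Prop :=
  [/\ (forall (v : qnode Q) (k : 'I_4),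
        (val (qind v) < qindex (qsucc v k))%N),
      (forall v : qnode Q, exists2 r, qroot Q = Some r & connect (@qedge n C Q) r v),
      (forall (v : qnode Q) (k : 'I_4), qwt v k = 0 -> qsucc v k = None)
    & qrootw Q = 0 -> qroot Q = None].

(* block selector: 0 = (row 0, col 0), 1 = (0,1), 2 = (1,0), 3 = (1,1) *)
Definition blk (r c : bool) : 'I_4 := inord (2 * r + c)%N.

(* entry (r, c) of the matrix M^j_{(w, e)} without the root weight w(e):
   product of the weights along the path selected by the row/column bits
   (levels skipped by an edge contribute the all-ones factor J).
   [f] is fuel; n.+1 suffices since indices strictly increase. *)
Fixpoint qval (n : nat) (C : nzRingType) (Q : qmdd n C) (f : nat)
  (o : option (qnode Q)) (r c : 'I_n -> bool) : C :=
  match o with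
  | None => 1
  | Some v =>
      if f is f'.+1 then
        let k := blk (r (qind v)) (c (qind v)) in
        qwt v k * qval f' (qsucc v k) r c
      else 0
  end.

Definition qsem (n : nat) (C : nzRingType) (Q : qmdd n C) : 'M[C]_(2 ^ n) :=
  \matrix_(i, j) (qrootw Q * qval n.+1 (qroot Q) (bits_of i) (bits_of j)).

Definition ltsem (n : nat) (C : nzRingType) (Q : qmdd n C)
  (pi : 'I_n -> {set 'I_n}) : 'M[C]_(2 ^ n) := lt_mx pi (qsem Q).

Definition qreduced (n : nat) (C : Type) (Q : qmdd n C) : Prop :=
  (forall u v : qnode Q, qind u = qind v ->
     (forall k, qsucc u k = qsucc v k /\ qwt u k = qwt v k) -> u = v) /\
  (forall v : qnode Q,
     ~ (forall k, qsucc v k = qsucc v 0 /\ qwt v k = qwt v 0)).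

Definition qnormalized (n : nat) (C : numDomainType) (Q : qmdd n C) : Prop :=
  forall v : qnode Q,
    [/\ (exists k, qwt v k != 0),
        (forall k, qwt v k != 0 -> `|qwt v k| <= 1),
        (exists2 k, qwt v k != 0 & `|qwt v k| = 1)
      &
        forall k, `|qwt v k| = 1 ->
          (forall k' : 'I_4, (k' < k)%N -> `|qwt v k'| != 1) -> qwt v k = 1].

Definition qiso (n : nat) (C : Type) (Q1 Q2 : qmdd n C) : Prop :=
  exists f : qnode Q1 -> qnode Q2,
    [/\ bijective f,
        (forall v, qind (f v) = qind v),
        (forall v k, qsucc (f v) k = omap f (qsucc v k)),
        (forall v k, qwt (f v) k = qwt v k)
      & qroot Q2 = omap f (qroot Q1) /\ qrootw Q2 = qrootw Q1].

Definition unitary_mx (C : numClosedFieldType) (m : nat) (U : 'M[C]_m) : Prop :=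
  U *m (map_mx Num.conj U)^T = 1%:M /\ (map_mx Num.conj U)^T *m U = 1%:M.

From HB Require Import structures.
From mathcomp Require Import all_boot all_order all_algebra fingraph.
From mathcomp Require Import reals complex.
From mathcomp Require Import zify.
Import Order.TTheory GRing.Theory Num.Theory.
Local Open Scope ring_scope.
Set Implicit Arguments. Unset Strict Implicit. Unset Printing Implicit Defensive.

(* A QMDD edge of weight w to o denotes w * f_o, where f_o maps the row and
   column bits to the product of the weights along the path they select.  In a
   reduced normalized QMDD, f_o has normalization factor 1 -- the factor that
   the leftmost-maximal-weight rule extracts from a function, level by level --
   and the index of o is the first level f_o depends on.  Edge weights are then
   normalization factors of cofactors, so f_o determines o (by (RI) and (RS),
   inductively from the terminal), and two QMDDs for the same matrix are
   isomorphic via the nodes reached along the same bits.  Conversely, the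
   normalized nonzero restrictions of the matrix that still depend on some level
   are the nodes of a reduced normalized QMDD.  A linear transformation only
   permutes rows and columns, so it does not interfere. *)

(** * Indices as bit vectors; linear transformations *)

Section BitIndex.
Local Open Scope nat_scope.
Variables (n : nat) (b : 'I_n -> bool).

Definition low_bits (t : nat) : nat := \sum_(k < n | t <= k) b k * 2 ^ (n - k.+1).

Lemma low_bitsS t (t_lt_n : t < n) :
  low_bits t = b (Ordinal t_lt_n) * 2 ^ (n - t.+1) + low_bits t.+1.
Proof.
rewrite /low_bits (bigD1 (Ordinal t_lt_n)) //=; congr (_ + _).
by apply: eq_bigl => k; rewrite ltn_neqAle -val_eqE /= eq_sym andbC.
Qed.

Lemma low_bits_lt s : s <= n -> low_bits (n - s) < 2 ^ s.
Proof.
elim: s => [|s IHs] le_s_n.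
  by rewrite subn0 /low_bits big_pred0 // => k; rewrite leqNgt ltn_ord.
have lt_n : n - s.+1 < n by lia.
rewrite (low_bitsS lt_n).
have -> : n - (n - s.+1).+1 = s by lia.
have -> : (n - s.+1).+1 = n - s by lia.
rewrite expnS mul2n -addnn -addnS leq_add //; last by rewrite IHs // ltnW.
by case: (b _); rewrite ?mul1n ?mul0n.
Qed.

Lemma bits_of_idx (k : 'I_n) : bits_of (idx_of_bits b) k = b k.
Proof.
have sum_lt : \sum_(k < n) b k * 2 ^ (n - k.+1) < 2 ^ n.
  by have := low_bits_lt (leqnn n); rewrite subnn /low_bits (eq_bigl xpredT).
rewrite /bits_of /idx_of_bits insubdK -?topredE //=.
rewrite (bigID (fun j : 'I_n => j < k)) /=.
rewrite [X in _ + X](eq_bigl (fun j : 'I_n => k <= j)) => [|j]; last by rewrite -leqNgt.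
rewrite -/(low_bits k) (low_bitsS (ltn_ord k)) (_ : Ordinal _ = k); last exact: val_inj.
set e := n - k.+1; set high := \sum_(j < n | _) _.
have /dvdnP[q ->] : 2 ^ e.+1 %| high.
  apply: dvdn_sum => j lt_jk; apply/dvdn_mull/dvdn_exp2l.
  by rewrite /e; have := ltn_ord k; lia.
have low_lt : low_bits k.+1 < 2 ^ e.
  by rewrite (_ : k.+1 = n - e) ?low_bits_lt /e; have := ltn_ord k; lia.
rewrite expnS mulnA addnA -mulnDl divnMDl ?expn_gt0 // divn_small // addn0.
by rewrite oddD oddM andbF; case: (b k).
Qed.

End BitIndex.

Lemma eq_idx_of_bits n (b b' : 'I_n -> bool) :
  b =1 b' -> idx_of_bits b = idx_of_bits b'.
Proof. by move=> eq_b; congr insubd; apply: eq_bigr => k _; rewrite eq_b. Qed.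

Lemma idx_of_bitsK n (i : 'I_(2 ^ n)) : idx_of_bits (bits_of i) = i.
Proof.
have idx_inj : injective (fun b : {ffun 'I_n -> bool} => idx_of_bits b).
  by move=> b b' eq_idx; apply/ffunP => k; rewrite -bits_of_idx eq_idx bits_of_idx.
have := inj_card_onto idx_inj; rewrite card_ffun !card_ord card_bool.
case/(_ (leqnn _) i)/codomP => b ->.
by apply: eq_idx_of_bits => k; rewrite bits_of_idx.
Qed.

Section LinearTransformation.
Local Open Scope nat_scope.
Variables (n : nat) (pi : 'I_n -> {set 'I_n}).
Hypothesis pi_lt : lin_trans pi.

Lemma odd_eq_sum (I : finType) (P : pred I) (f g : I -> nat) :
  (forall i, P i -> odd (f i) = odd (g i)) ->
  odd (\sum_(i | P i) f i) = odd (\sum_(i | P i) g i).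
Proof.
move=> eq_fg; apply: (big_ind2 (fun a b => odd a = odd b)) => // a1 a2 b1 b2 e1 e2.
by rewrite !oddD e1 e2.
Qed.

Lemma lc_evalE (Y : {set 'I_n}) (v : 'I_n -> bool) :
  lc_eval Y v = odd (\sum_(k in Y) v k).
Proof.
rewrite /lc_eval -sum1_card; congr odd; rewrite big_mkcond [RHS]big_mkcond.
by apply: eq_bigr => k _; rewrite inE; case: (k \in Y); case: (v k).
Qed.

Lemma lt_vec_inj (v w : 'I_n -> bool) : lt_vec pi v =1 lt_vec pi w -> v =1 w.
Proof.
case: pi_lt => _ span eq_vw j; have [S x_j] := span j.
suff recover (x : 'I_n -> bool) : x j = odd (\sum_(i in S) \sum_(k in pi i) (x k : nat)).
  rewrite !recover; apply: odd_eq_sum => i _.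
  by have := eq_vw i; rewrite /lt_vec !lc_evalE.
have -> : \sum_(i in S) \sum_(k in pi i) (x k : nat) =
          \sum_k #|[set i in S | k \in pi i]| * x k.
  under eq_bigr do rewrite big_mkcond /=.
  rewrite exchange_big; apply: eq_bigr => k _; rewrite -sum1_card big_distrl /=.
  rewrite big_mkcond [RHS]big_mkcond; apply: eq_bigr => i _; rewrite inE.
  by case: (i \in S); case: (k \in pi i); rewrite ?mul1n.
rewrite (odd_eq_sum (g := fun k => (k == j) * x k)) => [|k _]; last first.
  by rewrite !oddM -x_j; case: (k == j).
by rewrite (bigD1 j) //= eqxx mul1n big1 ?addn0 ?oddb // => k /negbTE ->.
Qed.

Lemma lt_perm_bij : bijective (lt_perm pi).
Proof.
apply: injF_bij => i i' eq_ii'.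
have eq_vec : lt_vec pi (bits_of i) =1 lt_vec pi (bits_of i').
  by move=> k; have := congr1 (fun x => bits_of x k) eq_ii'; rewrite /lt_perm !bits_of_idx.
by rewrite -(idx_of_bitsK i) -(idx_of_bitsK i'); apply/eq_idx_of_bits/lt_vec_inj.
Qed.

Lemma lt_mx_inj (C : Type) : injective (@lt_mx C n pi).
Proof.
have [g _ permVK] := lt_perm_bij.
move=> A B /matrixP eq_AB; apply/matrixP => i j.
by have := eq_AB (g i) (g j); rewrite !mxE !permVK.
Qed.

Lemma lt_mx_surj (C : Type) (B : 'M[C]_(2 ^ n)) : exists A, lt_mx pi A = B.
Proof.
have [g permK _] := lt_perm_bij.
by exists (\matrix_(i, j) B (g i) (g j)); apply/matrixP => i j; rewrite !mxE !permK.
Qed.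

End LinearTransformation.

(** * Functions of the row and column bits *)

Lemma blkK (k : 'I_4) : blk (2 <= k)%N (odd k) = k.
Proof. by apply: val_inj; rewrite /blk /= inordK; case: k => [[|[|[|[|m]]]] ?]. Qed.

Lemma blk_row rb cb : (2 <= blk rb cb)%N = rb.
Proof. by rewrite /blk inordK; case: rb; case: cb. Qed.

Lemma blk_col rb cb : odd (blk rb cb) = cb.
Proof. by rewrite /blk inordK; case: rb; case: cb. Qed.

Lemma exists_max_norm (C : numDomainType) (T : finType) (x0 : T) (f : T -> C) :
  exists k, forall k', `|f k'| <= `|f k|.
Proof.
suff [k max_k] : exists k, forall k', k' \in enum T -> `|f k'| <= `|f k|.
  by exists k => k'; apply: max_k; rewrite mem_enum.
elim: (enum T) => [|a s [k max_k]]; first by exists x0.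
have /orP[le_ak|le_ka] := real_leVge (normr_real (f a)) (normr_real (f k)).
  by exists k => k'; rewrite inE => /predU1P[->|/max_k].
exists a => k'; rewrite inE => /predU1P[->|/max_k/le_trans]; last exact.
exact: lexx.
Qed.

Section Qmdd.
Variables (n : nat) (C : numFieldType).
Local Notation V := {ffun 'I_n -> bool}.
Local Notation P := (V * V)%type.
(* Values in the regular module C^o, so that functions are scaled by *:. *)
Local Notation Fn := {ffun P -> C^o}.
Implicit Types (F G : Fn) (p q : P) (r : V) (c : C).

Definition set_bit (i : nat) (b : bool) (r : V) : V :=
  [ffun k : 'I_n => if val k == i then b else r k].

Definition splice (j : nat) (r0 r : V) : V :=
  [ffun k : 'I_n => if (k < j)%N then r0 k else r k].

Definition pzero : P := ([ffun => false], [ffun => false]).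

Definition cofactor (i : nat) (k : 'I_4) (F : Fn) : Fn :=
  [ffun p => F (set_bit i (2 <= k)%N p.1, set_bit i (odd k) p.2)].

Definition restrict (j : nat) (p0 : P) (F : Fn) : Fn :=
  [ffun p => F (splice j p0.1 p.1, splice j p0.2 p.2)].

Definition indep_lt (m : nat) (F : Fn) : bool := restrict m pzero F == F.

Definition top_level (F : Fn) : nat := \max_(m < n.+1 | indep_lt m F) m.

Lemma indep_ltP m F :
  reflect (forall p q : P,
             (forall k : 'I_n, (m <= k)%N -> p.1 k = q.1 k /\ p.2 k = q.2 k) -> F p = F q)
          (indep_lt m F).
Proof.
apply: (iffP eqP) => [<- p q agree_pq | indep_F].
  rewrite !ffunE; congr (F (_, _)); apply/ffunP => k; rewrite !ffunE;
    by case: ltnP => // /agree_pq[eq1 eq2]; rewrite ?eq1 ?eq2.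
apply/ffunP => p; rewrite ffunE; apply: indep_F => k le_mk.
by rewrite !ffunE ltnNge le_mk.
Qed.

Lemma indep_lt0 F : indep_lt 0 F.
Proof.
apply/indep_ltP => -[r c] [r' c'] agree_pq.
by congr (F (_, _)); apply/ffunP => k; have [] := agree_pq k isT.
Qed.

Lemma indep_lt_le m m' F : (m' <= m)%N -> indep_lt m F -> indep_lt m' F.
Proof.
move=> le_m'm /indep_ltP indep_F; apply/indep_ltP => p q agree_pq.
by apply: indep_F => k /(leq_trans le_m'm); apply: agree_pq.
Qed.

Lemma indep_ltZ m c F : indep_lt m F -> indep_lt m (c *: F).
Proof.
by move/indep_ltP=> indep_F; apply/indep_ltP => p q /indep_F; rewrite !ffunE => ->.
Qed.

Lemma top_level_spec F : exists2 m : 'I_n.+1, indep_lt m F & top_level F = m.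
Proof.
have : (0 < #|[pred m : 'I_n.+1 | indep_lt m F]|)%N.
  by apply/card_gt0P; exists ord0; rewrite inE /= indep_lt0.
by case/(eq_bigmax_cond (@nat_of_ord _)) => m ? ?; exists m.
Qed.

Lemma indep_lt_top_level F : indep_lt (top_level F) F.
Proof. by have [m ? ->] := top_level_spec F. Qed.

Lemma top_level_le F : (top_level F <= n)%N.
Proof. by have [m _ ->] := top_level_spec F; rewrite -ltnS. Qed.

Lemma leq_top_level m F : (m <= n)%N -> indep_lt m F -> (m <= top_level F)%N.
Proof.
move=> le_mn indep_F.
exact: (@leq_bigmax_cond _ _ (@nat_of_ord _) (Ordinal (le_mn : (m < n.+1)%N))).
Qed.

Lemma cofactorZ i k c F : cofactor i k (c *: F) = c *: cofactor i k F.
Proof. by apply/ffunP => p; rewrite !ffunE. Qed.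

Lemma restrictZ j p0 c F : restrict j p0 (c *: F) = c *: restrict j p0 F.
Proof. by apply/ffunP => p; rewrite !ffunE. Qed.

Lemma set_bit_eq (i : 'I_n) b r : set_bit i b r i = b.
Proof. by rewrite ffunE eqxx. Qed.

Lemma set_bit_id (i : 'I_n) (r : V) : set_bit i (r i) r = r.
Proof. by apply/ffunP => k; rewrite ffunE; case: eqP => [/val_inj ->|]. Qed.

Lemma cofactor_blk (i : 'I_n) F (p : P) : cofactor i (blk (p.1 i) (p.2 i)) F p = F p.
Proof. by rewrite ffunE blk_row blk_col !set_bit_id; case: p. Qed.

Lemma eq_cofactors (i : 'I_n) F G : (forall k, cofactor i k F = cofactor i k G) -> F = G.
Proof. by move=> eq_FG; apply/ffunP => p; rewrite -(cofactor_blk i) eq_FG cofactor_blk. Qed.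

Lemma cofactor_indep m i k F : indep_lt m F -> (i < m)%N -> cofactor i k F = F.
Proof.
move=> /indep_ltP indep_F lt_im; apply/ffunP => p; rewrite ffunE.
apply: indep_F => k' le_mk' /=; rewrite !ffunE.
by case: eqP => // eq_k'i; move: (leq_trans lt_im le_mk'); rewrite -eq_k'i ltnn.
Qed.

Lemma indep_lt_cofactor i k F : indep_lt i F -> indep_lt i.+1 (cofactor i k F).
Proof.
move=> /indep_ltP indep_F; apply/indep_ltP => p q agree_pq; rewrite !ffunE.
apply: indep_F => k' le_ik' /=; rewrite !ffunE.
case: eqP => // /eqP ne_k'i; apply: agree_pq.
by rewrite ltn_neqAle eq_sym ne_k'i le_ik'.
Qed.

Lemma indep_lt_restrict j p0 F : indep_lt j (restrict j p0 F).
Proof.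
apply/indep_ltP => p q agree_pq; rewrite !ffunE; congr (F (_, _));
  apply/ffunP => k; rewrite !ffunE;
  by case: ltnP => // /agree_pq[eq1 eq2]; rewrite ?eq1 ?eq2.
Qed.

Lemma restrict_indep j p0 F : indep_lt j F -> restrict j p0 F = F.
Proof.
move=> /indep_ltP indep_F; apply/ffunP => p; rewrite ffunE; apply: indep_F => k le_jk.
by rewrite !ffunE ltnNge le_jk.
Qed.

Lemma restrict0 p0 F : restrict 0 p0 F = F.
Proof. exact/restrict_indep/indep_lt0. Qed.

Lemma restrict_widen j i p0 F :
  (j <= i)%N -> indep_lt i (restrict j p0 F) -> restrict j p0 F = restrict i p0 F.
Proof.
move=> le_ji /indep_ltP indep_R; apply/ffunP => p.
rewrite (indep_R p (splice i p0.1 p.1, splice i p0.2 p.2)) => [|k le_ik]; last first.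
  by rewrite !ffunE ltnNge le_ik.
rewrite !ffunE; congr (F (_, _)); apply/ffunP => k; rewrite !ffunE;
  by case: (ltnP k j) => // /leq_trans/(_ le_ji) ->.
Qed.

Lemma cofactors_const_indep (i : 'I_n) F :
  indep_lt i F -> (forall k, cofactor i k F = cofactor i 0 F) -> indep_lt i.+1 F.
Proof.
move=> indep_F cofactorsF; apply/indep_ltP => p q agree_pq.
rewrite -(cofactor_blk i F p) -(cofactor_blk i F q) !cofactorsF.
exact: (indep_ltP _ _ (indep_lt_cofactor 0 indep_F)).
Qed.

Lemma restrict_cofactor (i : 'I_n) j p0 F :
  (i < j)%N -> restrict j p0 F = restrict j p0 (cofactor i (blk (p0.1 i) (p0.2 i)) F).
Proof.
move=> lt_ij; apply/ffunP => p; rewrite !ffunE blk_row blk_col.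
have splice_i (r0 r : V) : r0 i = splice j r0 r i by rewrite ffunE lt_ij.
by rewrite [p0.1 i](splice_i _ p.1) [p0.2 i](splice_i _ p.2) !set_bit_id.
Qed.

Lemma restrict_set_bit j (i : nat) b b' p0 F : indep_lt i.+1 F ->
  restrict j (set_bit i b p0.1, set_bit i b' p0.2) F = restrict j p0 F.
Proof.
move=> /indep_ltP indep_F; apply/ffunP => p; rewrite !ffunE; apply: indep_F => k lt_ik /=.
by rewrite !ffunE (gtn_eqF lt_ik).
Qed.

Lemma cofactor_restrict (i : 'I_n) k p0 F :
  cofactor i k (restrict i p0 F) =
  restrict i.+1 (set_bit i (2 <= k)%N p0.1, set_bit i (odd k) p0.2) F.
Proof.
apply/ffunP => p; rewrite !ffunE; congr (F (_, _)); apply/ffunP => k'; rewrite !ffunE;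
  case: (ltngtP k' i) => [lt_k'i|lt_ik'|/val_inj ->]; rewrite ?ltnSn //.
- by rewrite ltnS ltnW.
- by rewrite ltnS leqNgt lt_ik'.
- by rewrite ltnS ltnW.
- by rewrite ltnS leqNgt lt_ik'.
Qed.

(** * The normalization factor *)

Definition argmax_norm (s : 'I_4 -> C) : 'I_4 :=
  odflt ord0 [pick k | [forall k', `|s k'| <= `|s k|] &&
                       [forall k' : 'I_4, (k' < k)%N ==> (`|s k'| < `|s k|)]].

Lemma argmax_normP s :
  (forall k, `|s k| <= `|s (argmax_norm s)|) /\
  (forall k : 'I_4, (k < argmax_norm s)%N -> `|s k| < `|s (argmax_norm s)|).
Proof.
rewrite /argmax_norm; case: pickP => [k /andP[/forallP max_k /forallP first_k]|no_max].
  by split=> // k'; apply/implyP.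
have [km max_km] := exists_max_norm ord0 s.
have first_max : exists m, (m < 4)%N && (`|s (inord m)| == `|s km|).
  by exists km; rewrite ltn_ord inord_val eqxx.
case: (ex_minnP first_max) => m /andP[lt_m4 /eqP max_m] min_m.
have val_m : nat_of_ord (inord m : 'I_4) = m by rewrite inordK.
case/negP: (no_max (inord m)); rewrite max_m; apply/andP; split; first exact/forallP.
apply/forallP => k; apply/implyP => lt_km; rewrite lt_neqAle max_km andbT.
apply/negP => /eqP eq_k; have := min_m k; rewrite ltn_ord inord_val eq_k eqxx.
by move=> /(_ isT); rewrite -val_m leqNgt lt_km.
Qed.

Lemma eq_argmax_norm s s' : s =1 s' -> argmax_norm s = argmax_norm s'.
Proof.
move=> eq_s; congr odflt; apply: eq_pick => k /=.
by congr (_ && _); apply: eq_forallb => k'; rewrite !eq_s.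
Qed.

Lemma argmax_normZ s c : c != 0 -> argmax_norm (fun k => c * s k) = argmax_norm s.
Proof.
move=> c_neq0; have c_gt0 : 0 < `|c| by rewrite normr_gt0.
congr odflt; apply: eq_pick => k /=.
by congr (_ && _); apply: eq_forallb => k'; rewrite !normrM ?ler_pM2l ?ltr_pM2l.
Qed.

(* The factor a normalized node extracts from F, with the levels m, ..., m + d - 1
   left to fix: that of the leftmost cofactor of maximal modulus.  Once every
   level is fixed F is constant, so the point pzero is arbitrary. *)
Fixpoint nfactor_from (m d : nat) F : C :=
  if d is d'.+1 then
    let s k := nfactor_from m.+1 d' (cofactor m k F) in s (argmax_norm s)
  else F pzero.

Definition nfactor F : C := nfactor_from 0 n F.

Definition normalize F : Fn := (nfactor F)^-1 *: F.

Lemma nfactor_fromZ m d c F : nfactor_from m d (c *: F) = c * nfactor_from m d F.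
Proof.
elim: d m F => [|d IHd] m F /=; first by rewrite ffunE.
set s := fun k => nfactor_from m.+1 d (cofactor m k F).
have sZ k : nfactor_from m.+1 d (cofactor m k (c *: F)) = c * s k.
  by rewrite cofactorZ IHd.
rewrite (eq_argmax_norm sZ) sZ.
by have [->|c_neq0] := eqVneq c 0; rewrite ?mul0r ?argmax_normZ.
Qed.

Lemma nfactor_from_max m d F p :
  (m + d = n)%N -> indep_lt m F -> `|F p| <= `|nfactor_from m d F|.
Proof.
elim: d m F => [|d IHd] m F /= mdn /indep_ltP indep_F.
  by rewrite (indep_F p pzero) // => k; rewrite -(addn0 m) mdn leqNgt ltn_ord.
have lt_mn : (m < n)%N by rewrite -mdn addnS ltnS leq_addr.
set s := fun k => nfactor_from m.+1 d (cofactor m k F).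
pose i := Ordinal lt_mn; have [max_s _] := argmax_normP s.
apply: le_trans (max_s (blk (p.1 i) (p.2 i))).
rewrite -[X in `|X| <= _](cofactor_blk i) IHd ?addSnnS //.
exact/indep_lt_cofactor/indep_ltP.
Qed.

Lemma nfactor_from_attained m d F : exists p, nfactor_from m d F = F p.
Proof.
elim: d m F => [|d IHd] m F /=; first by exists pzero.
set k := argmax_norm _; have [p ->] := IHd m.+1 (cofactor m k F).
by exists (set_bit m (2 <= k)%N p.1, set_bit m (odd k) p.2); rewrite ffunE.
Qed.

Lemma nfactor_from_indep m F :
  (m <= n)%N -> indep_lt m F -> nfactor F = nfactor_from m (n - m) F.
Proof.
move=> le_mn indep_F.
suff skip j : (j <= m)%N -> nfactor F = nfactor_from j (n - j) F by exact: skip.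
elim: j => [|j IHj] lt_jm; first by rewrite subn0.
rewrite IHj 1?ltnW //.
have -> : (n - j = (n - j.+1).+1)%N by lia.
rewrite /=.
have cofactor_F k : nfactor_from j.+1 (n - j.+1) (cofactor j k F) =
                    nfactor_from j.+1 (n - j.+1) F by rewrite (cofactor_indep _ indep_F).
by rewrite (eq_argmax_norm cofactor_F) cofactor_F.
Qed.

Lemma nfactor_cofactor (i : 'I_n) F : indep_lt i F ->
  nfactor F = nfactor (cofactor i (argmax_norm (fun k => nfactor (cofactor i k F))) F).
Proof.
set s := fun k => _; move=> indep_F.
rewrite (nfactor_from_indep (ltnW (ltn_ord i)) indep_F).
have -> : (n - i = (n - i.+1).+1)%N by have := ltn_ord i; lia.
have sE k : nfactor_from i.+1 (n - i.+1) (cofactor i k F) = s k.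
  by rewrite /s (nfactor_from_indep (ltn_ord i)) // indep_lt_cofactor.
by rewrite /= (eq_argmax_norm sE) sE.
Qed.

Lemma nfactor_max F p : `|F p| <= `|nfactor F|.
Proof. exact/nfactor_from_max/indep_lt0. Qed.

Lemma nfactor_eq0 F : (nfactor F == 0) = (F == 0).
Proof.
apply/eqP/eqP => [F0|->].
  apply/ffunP => p; apply/eqP; rewrite ffunE -normr_le0 -(normr0 C) -F0.
  exact: nfactor_max.
by rewrite /nfactor; have [p ->] := nfactor_from_attained 0 n 0; rewrite ffunE.
Qed.

Lemma nfactorZ c F : nfactor (c *: F) = c * nfactor F.
Proof. exact: nfactor_fromZ. Qed.

Lemma eq_scale_nfactor1 a b F G :
  nfactor F = 1 -> nfactor G = 1 -> a *: F = b *: G -> a = b.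
Proof. by move=> F1 G1 /(congr1 nfactor); rewrite !nfactorZ F1 G1 !mulr1. Qed.

Lemma normalizeZ c F : c != 0 -> normalize (c *: F) = normalize F.
Proof. by move=> c_neq0; rewrite /normalize nfactorZ scalerA invfM mulrAC mulVf ?mul1r. Qed.

Lemma normalizeK F : nfactor F *: normalize F = F.
Proof.
have [->|F_neq0] := eqVneq F 0; first by rewrite /normalize !scaler0.
by rewrite scalerA mulfV ?scale1r ?nfactor_eq0.
Qed.

Lemma nfactor_normalize F : F != 0 -> nfactor (normalize F) = 1.
Proof. by move=> F_neq0; rewrite nfactorZ mulVf ?nfactor_eq0. Qed.

Lemma normalize_eq0 F : (normalize F == 0) = (F == 0).
Proof.
have [->|F_neq0] := eqVneq F 0; first by rewrite /normalize scaler0 eqxx.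
by rewrite scaler_eq0 invr_eq0 nfactor_eq0 (negbTE F_neq0).
Qed.

Definition normalized_weights (w : 'I_4 -> C) : Prop :=
  [/\ (exists k, w k != 0),
      (forall k, w k != 0 -> `|w k| <= 1),
      (exists2 k, w k != 0 & `|w k| = 1)
    & forall k, `|w k| = 1 ->
          (forall k' : 'I_4, (k' < k)%N -> `|w k'| != 1) -> w k = 1].

Lemma normalized_weights_argmax w : normalized_weights w -> w (argmax_norm w) = 1.
Proof.
case=> _ le_w1 [k0 w_k0_neq0 w_k0] leftmost_w; have [max_w first_w] := argmax_normP w.
have w_max_neq0 : w (argmax_norm w) != 0.
  by rewrite -normr_gt0 (lt_le_trans ltr01) // -w_k0 max_w.
have norm_max : `|w (argmax_norm w)| = 1.
  by apply/eqP; rewrite eq_le le_w1 //= -w_k0 max_w.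
by apply: leftmost_w => // k /first_w; rewrite norm_max => /lt_eqF ->.
Qed.

Lemma argmax_normalized w : w (argmax_norm w) = 1 -> normalized_weights w.
Proof.
move=> w_max; have [max_w first_w] := argmax_normP w; rewrite w_max normr1 in max_w first_w.
split=> [|k _||k w_k1 not_first]; last 1 first.
- case: (ltngtP k (argmax_norm w)) => [/first_w|/not_first|/val_inj ->] //.
    by rewrite w_k1 ltxx.
  by rewrite w_max normr1 eqxx.
- by exists (argmax_norm w); rewrite w_max oner_neq0.
- exact: max_w.
- by exists (argmax_norm w); rewrite w_max ?oner_neq0 ?normr1.
Qed.

(** * Semantics of QMDD edges *)

Definition qmono (Q : qmdd n C) : Prop :=
  forall (v : qnode Q) (k : 'I_4), (qind v < qindex (qsucc v k))%N.

Definition qzero_term (Q : qmdd n C) : Prop :=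
  forall (v : qnode Q) (k : 'I_4), qwt v k = 0 -> qsucc v k = None.

Section Semantics.
Variable Q : qmdd n C.
Hypothesis Q_mono : qmono Q.
Implicit Types (o : option (qnode Q)) (u v : qnode Q).

Lemma qindex_le o : (qindex o <= n)%N.
Proof. by case: o => [v|] //=; apply: ltnW. Qed.

Lemma qnode_ind (R : option (qnode Q) -> Prop) :
  R None -> (forall v, (forall k, R (qsucc v k)) -> R (Some v)) -> forall o, R o.
Proof.
move=> R_None R_Some o; suff R_depth d : forall o, (n - qindex o < d)%N -> R o.
  by apply: (R_depth n.+1); rewrite ltnS leq_subr.
elim: d => [//|d IHd] [v|] //= lt_d; apply: R_Some => k; apply: IHd.
by have := Q_mono v k; have := qindex_le (qsucc v k); have := ltn_ord (qind v); lia.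
Qed.

Lemma eq_qval f o (r r' c c' : 'I_n -> bool) :
  r =1 r' -> c =1 c' -> qval f o r c = qval f o r' c'.
Proof. by move=> eq_r eq_c; elim: f o => [|f IHf] [v|] //=; rewrite eq_r eq_c IHf. Qed.

Lemma qval_fuel o f (r c : 'I_n -> bool) :
  (n - qindex o < f)%N -> qval f o r c = qval n.+1 o r c.
Proof.
elim/qnode_ind: o f => [|v IHv] [|f] //= lt_f; congr (_ * _).
set k := blk _ _; have := Q_mono v k; have := qindex_le (qsucc v k).
have := ltn_ord (qind v); move=> lt_vn le_kn lt_vk.
by rewrite (IHv k f) ?(IHv k n) //; lia.
Qed.

Definition qfn o : Fn := [ffun p : P => qval n.+1 o p.1 p.2].

Lemma qfn_None p : qfn None p = 1.
Proof. by rewrite ffunE. Qed.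

Lemma qfn_Some v p :
  qfn (Some v) p = qwt v (blk (p.1 (qind v)) (p.2 (qind v))) *
                   qfn (qsucc v (blk (p.1 (qind v)) (p.2 (qind v)))) p.
Proof.
rewrite !ffunE /=; congr (_ * _); set k := blk _ _.
by rewrite qval_fuel //; have := Q_mono v k; have := qindex_le (qsucc v k); lia.
Qed.

Lemma indep_lt_qfn o : indep_lt (qindex o) (qfn o).
Proof.
elim/qnode_ind: o => [|v IHv]; apply/indep_ltP => p q agree_pq; first by rewrite !qfn_None.
rewrite !qfn_Some; have [-> ->] := agree_pq (qind v) (leqnn _); congr (_ * _).
set k := blk _ _; apply: (indep_ltP _ _ (IHv k)) => k' le_k'; apply: agree_pq.
exact: leq_trans (ltnW (Q_mono v k)) le_k'.
Qed.

Lemma restrict_qfn_id j p0 o : (j <= qindex o)%N -> restrict j p0 (qfn o) = qfn o.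
Proof. by move=> le_j; apply/restrict_indep/(indep_lt_le le_j)/indep_lt_qfn. Qed.

Lemma cofactor_qfn v k : cofactor (qind v) k (qfn (Some v)) = qwt v k *: qfn (qsucc v k).
Proof.
apply/ffunP => p; rewrite [LHS]ffunE qfn_Some /= !set_bit_eq blkK [RHS]ffunE; congr (_ * _).
apply: (indep_ltP _ _ (indep_lt_qfn (qsucc v k))) => k' le_k' /=; rewrite !ffunE.
by case: eqP => // eq_k'; move: (leq_trans (Q_mono v k) le_k'); rewrite eq_k' ltnn.
Qed.

Lemma restrict_qfn o j p0 : (j <= n)%N -> exists o' w, [/\ (j <= qindex o')%N,
  (forall u', o' = Some u' -> exists2 u, o = Some u & connect (@qedge _ _ Q) u u')
  & restrict j p0 (qfn o) = w *: qfn o'].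
Proof.
move=> le_jn; elim/qnode_ind: o => [|v IHv].
  by exists None, 1; rewrite scale1r restrict_qfn_id.
have [le_jv|lt_vj] := leqP j (qind v).
  by exists (Some v), 1; rewrite scale1r restrict_qfn_id //; split=> // u' [<-]; exists v.
set k := blk (p0.1 (qind v)) (p0.2 (qind v)).
have [o' [w [le_jo' reach_o' restr_o']]] := IHv k.
exists o', (qwt v k * w); split=> //.
  move=> u' /reach_o'[u succ_u conn_u]; exists v => //; apply: connect_trans conn_u.
  by apply/connect1/existsP; exists k; rewrite succ_u.
by rewrite (restrict_cofactor _ _ lt_vj) cofactor_qfn restrictZ restr_o' scalerA.
Qed.

Lemma connect_qind u v : connect (@qedge _ _ Q) u v -> (qind u <= qind v)%N.
Proof.
case/connectP => s; elim: s u => [|u' s IHs] u /=; first by move=> _ ->.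
case/andP => /existsP[k /eqP succ_u] /IHs le_u' /le_u'; apply: leq_trans; apply: ltnW.
by have := Q_mono u k; rewrite succ_u.
Qed.

Hypothesis Q_zero : qzero_term Q.

Lemma restrict_qfn_connect u v : connect (@qedge _ _ Q) u v ->
  exists p0 w, w != 0 /\ restrict (qind v) p0 (qfn (Some u)) = w *: qfn (Some v).
Proof.
case/connectP => s; elim: s u => [|u' s IHs] u /=.
  by move=> _ ->; exists pzero, 1; rewrite oner_neq0 scale1r restrict_qfn_id.
case/andP => /existsP[k /eqP succ_u] path_s last_s.
have [p0 [w [w_neq0 restr_u']]] := IHs u' path_s last_s.
have lt_uu' : (qind u < qind u')%N by have := Q_mono u k; rewrite succ_u.
have lt_uv : (qind u < qind v)%N.
  by apply: leq_trans lt_uu' (connect_qind _); apply/connectP; exists s.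
exists (set_bit (qind u) (2 <= k)%N p0.1, set_bit (qind u) (odd k) p0.2), (qwt u k * w).
split.
  by rewrite mulf_neq0 //; apply/eqP => /Q_zero; rewrite succ_u.
rewrite (restrict_cofactor _ _ lt_uv) /= !ffunE !eqxx blkK cofactor_qfn succ_u restrictZ.
rewrite restrict_set_bit ?restr_u' ?scalerA //.
exact: indep_lt_le lt_uu' (indep_lt_qfn (Some u')).
Qed.

End Semantics.

(** * Uniqueness *)

Definition qgood (Q : qmdd n C) : Prop :=
  [/\ qmono Q, qzero_term Q, qreduced Q & qnormalized Q].

Section Canonicity.
Variable Q : qmdd n C.
Hypothesis Q_good : qgood Q.
Let Q_mono : qmono Q. Proof. by case: Q_good. Qed.
Let Q_zero : qzero_term Q. Proof. by case: Q_good. Qed.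
Implicit Types (o : option (qnode Q)) (v : qnode Q).

Lemma nfactor_qfn o : nfactor (qfn o) = 1.
Proof.
elim/(qnode_ind Q_mono): o => [|v IHv].
  have [p nf_p] := nfactor_from_attained 0 n (qfn (None : option (qnode Q))).
  by rewrite /nfactor nf_p qfn_None.
rewrite (nfactor_cofactor (indep_lt_qfn Q_mono (Some v))).
have wtE k : nfactor (cofactor (qind v) k (qfn (Some v))) = qwt v k.
  by rewrite (cofactor_qfn Q_mono) nfactorZ IHv mulr1.
rewrite (eq_argmax_norm wtE) wtE; apply: normalized_weights_argmax.
by case: Q_good => _ _ _; apply.
Qed.

Lemma top_level_qfn_Some v :
  (forall k, qfn (qsucc v k) = qfn (qsucc v 0) -> qsucc v k = qsucc v 0) ->
  top_level (qfn (Some v)) = qind v.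
Proof.
move=> succ_inj; apply/eqP.
rewrite eqn_leq leq_top_level ?(ltnW (ltn_ord _)) //; last first.
  exact: (indep_lt_qfn Q_mono (Some v)).
rewrite andbT leqNgt; apply/negP => lt_v_top.
have indep_v : indep_lt (qind v).+1 (qfn (Some v)).
  exact: indep_lt_le lt_v_top (indep_lt_top_level _).
have child_v k : qwt v k *: qfn (qsucc v k) = 1 *: qfn (Some v).
  by rewrite -(cofactor_qfn Q_mono) (cofactor_indep _ indep_v) ?scale1r.
have wt1 k : qwt v k = 1 by apply: eq_scale_nfactor1 (child_v k); rewrite nfactor_qfn.
case: Q_good => _ _ [_ /(_ v) not_RS] _; apply: not_RS => k.
rewrite !wt1; split=> //; apply: succ_inj.
by apply: (scalerI (oner_neq0 C)); rewrite -{1}(wt1 k) -(wt1 0) !child_v.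
Qed.

Lemma qfn_Some_inj v1 v2 : qind v1 = qind v2 ->
  (forall k, qfn (qsucc v1 k) = qfn (qsucc v2 k) -> qsucc v1 k = qsucc v2 k) ->
  qfn (Some v1) = qfn (Some v2) -> v1 = v2.
Proof.
move=> eq_ind succ_inj eq_qfn; case: Q_good => _ _ [/(_ v1 v2 eq_ind) + _] _; apply=> k.
have eq_child : qwt v1 k *: qfn (qsucc v1 k) = qwt v2 k *: qfn (qsucc v2 k).
  by rewrite -!(cofactor_qfn Q_mono) eq_ind eq_qfn.
have eq_wt : qwt v1 k = qwt v2 k by apply: eq_scale_nfactor1 eq_child; rewrite nfactor_qfn.
split=> //; have [wt0|wt_neq0] := eqVneq (qwt v1 k) 0.
  by rewrite !Q_zero // -eq_wt.
by apply/succ_inj/(scalerI wt_neq0); rewrite eq_child eq_wt.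
Qed.

(* Joint induction on the depth: (RS) makes the top index exact only once the
   children are known to be determined by their functions. *)
Lemma top_level_qfn_inj d :
  (forall o, (n - qindex o <= d)%N -> top_level (qfn o) = qindex o) /\
  (forall o1 o2, (n - qindex o1 <= d)%N -> (n - qindex o2 <= d)%N ->
     qfn o1 = qfn o2 -> o1 = o2).
Proof.
have top_None : top_level (qfn (None : option (qnode Q))) = n.
  apply/eqP; rewrite eqn_leq top_level_le leq_top_level //.
  exact: (indep_lt_qfn Q_mono None).
elim: d => [|d [_ IHinj]].
  have no_node o : (n - qindex o <= 0)%N -> o = None.
    by case: o => // v; rewrite leqn0 subn_eq0 leqNgt ltn_ord.
  by split=> [o /no_node ->|o1 o2 /no_node -> /no_node ->].
have child_depth v k : (n - qind v <= d.+1)%N -> (n - qindex (qsucc v k) <= d)%N.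
  have := Q_mono v k; have := qindex_le (qsucc v k); have := ltn_ord (qind v).
  by lia.
have top_d o : (n - qindex o <= d.+1)%N -> top_level (qfn o) = qindex o.
  case: o => [v /= depth_v|//]; apply: top_level_qfn_Some => k.
  by apply: IHinj; apply: child_depth.
split=> // o1 o2 depth1 depth2 eq_qfn.
have := congr1 top_level eq_qfn; rewrite !top_d //.
case: o1 o2 depth1 depth2 eq_qfn => [v1|] [v2|] //= depth1 depth2 eq_qfn eq_ind.
- congr Some; apply: qfn_Some_inj eq_qfn; first exact: val_inj.
  by move=> k; apply: IHinj; apply: child_depth.
- by have := ltn_ord (qind v1); rewrite eq_ind ltnn.
- by have := ltn_ord (qind v2); rewrite -eq_ind ltnn.
Qed.

Lemma top_level_qfn o : top_level (qfn o) = qindex o.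
Proof. by apply: (top_level_qfn_inj n).1; rewrite leq_subr. Qed.

Lemma qfn_inj : injective (@qfn Q).
Proof. by move=> o1 o2; apply: (top_level_qfn_inj n).2; rewrite leq_subr. Qed.

Lemma eq_scaled_qfn w1 w2 o1 o2 : (w1 = 0 -> o1 = None) -> (w2 = 0 -> o2 = None) ->
  w1 *: qfn o1 = w2 *: qfn o2 -> w1 = w2 /\ o1 = o2.
Proof.
move=> o1_term o2_term eq_w.
have eq_w12 : w1 = w2 by apply: eq_scale_nfactor1 eq_w; rewrite nfactor_qfn.
split=> //; have [w0|w_neq0] := eqVneq w1 0; first by rewrite o1_term ?o2_term -?eq_w12.
by apply/qfn_inj/(scalerI w_neq0); rewrite eq_w eq_w12.
Qed.

End Canonicity.

Lemma qmdd_wf_good (Q : qmdd n C) : qmdd_wf Q -> qreduced Q -> qnormalized Q -> qgood Q.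
Proof. by case. Qed.

Lemma qrootw_neq0 (Q : qmdd n C) (r : qnode Q) :
  qmdd_wf Q -> qroot Q = Some r -> qrootw Q != 0.
Proof. by case=> _ _ _ rootw0 root_r; apply/eqP => /rootw0; rewrite root_r. Qed.

Section Matching.
Variables Q1 Q2 : qmdd n C.
Hypotheses (Q1_wf : qmdd_wf Q1) (Q1_good : qgood Q1) (Q2_good : qgood Q2).
Hypothesis eq_root : qrootw Q1 *: qfn (qroot Q1) = qrootw Q2 *: qfn (qroot Q2).

(* v is reached from the root of Q1 along some bit prefix p0; following the
   same prefix in Q2 must lead to a node computing the same function. *)
Lemma qnode_match (v : qnode Q1) : exists v2 : qnode Q2, qfn (Some v2) = qfn (Some v).
Proof.
have [[Q1_mono Q1_zero _ _] [Q2_mono _ _ _]] := (Q1_good, Q2_good).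
have [_ Q1_reach _ _] := Q1_wf.
have [r root_r conn_r] := Q1_reach v.
have [p0 [w [w_neq0 restr_v]]] := restrict_qfn_connect Q1_mono Q1_zero conn_r.
have [o [w' [_ _ restr_o]]] :=
  restrict_qfn Q2_mono (qroot Q2) p0 (ltnW (ltn_ord (qind v))).
have rootw_neq0 := qrootw_neq0 Q1_wf root_r.
have eq_scaled : (qrootw Q1 * w) *: qfn (Some v) = (qrootw Q2 * w') *: qfn o.
  by rewrite -!scalerA -restr_v -restr_o -!restrictZ -root_r eq_root.
have eq_w :=
  eq_scale_nfactor1 (nfactor_qfn Q1_good _) (nfactor_qfn Q2_good _) eq_scaled.
have eq_fn : qfn (Some v) = qfn o.
  by apply: (scalerI (mulf_neq0 rootw_neq0 w_neq0)); rewrite eq_scaled eq_w.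
case: o eq_fn {restr_o eq_scaled} => [v2|] eq_fn; first by exists v2.
have := congr1 top_level eq_fn; rewrite !top_level_qfn //= => eq_n.
by have := ltn_ord (qind v); rewrite eq_n ltnn.
Qed.

End Matching.

Lemma qiso_of_eq_qfn (Q1 Q2 : qmdd n C) :
  qmdd_wf Q1 -> qgood Q1 -> qmdd_wf Q2 -> qgood Q2 ->
  qrootw Q1 *: qfn (qroot Q1) = qrootw Q2 *: qfn (qroot Q2) -> qiso Q1 Q2.
Proof.
move=> Q1_wf Q1_good Q2_wf Q2_good eq_root.
have [f qfn_f] := fin_all_exists (qnode_match Q1_wf Q1_good Q2_good eq_root).
have [g qfn_g] := fin_all_exists (qnode_match Q2_wf Q2_good Q1_good (esym eq_root)).
have qfn_omap_f o : qfn (omap f o) = qfn o.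
  by case: o => [v|] /=; last apply/ffunP => p; rewrite ?qfn_f ?qfn_None.
have qind_f v : qind (f v) = qind v.
  by apply: val_inj; have := congr1 top_level (qfn_f v); rewrite !top_level_qfn.
have [[Q1_mono Q1_zero _ _] [Q2_mono Q2_zero _ _]] := (Q1_good, Q2_good).
have eq_edge v k : qwt (f v) k = qwt v k /\ qsucc (f v) k = omap f (qsucc v k).
  apply: (eq_scaled_qfn Q2_good) => [/Q2_zero //|/Q1_zero -> //|].
  by rewrite qfn_omap_f -(cofactor_qfn Q1_mono) -qfn_f -qind_f cofactor_qfn.
exists f; split.
- exists g => v; apply: Some_inj.
    by apply: (qfn_inj Q1_good); rewrite qfn_g qfn_f.
  by apply: (qfn_inj Q2_good); rewrite qfn_f qfn_g.
- exact: qind_f.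
- by move=> v k; have [_ ->] := eq_edge v k.
- by move=> v k; have [-> _] := eq_edge v k.
suff [-> ->] : qrootw Q2 = qrootw Q1 /\ qroot Q2 = omap f (qroot Q1) by [].
apply: (eq_scaled_qfn Q2_good).
- by case: Q2_wf.
- by case: Q1_wf => _ _ _ root0 /root0 ->.
- by rewrite qfn_omap_f eq_root.
Qed.

(** * Existence *)

Section Construction.
Variable M : Fn.

(* Functions of top level n are constants, represented by the terminal node. *)
Definition subfns : seq Fn :=
  [seq F <- [seq normalize (restrict j.1 j.2 M) | j : 'I_n.+1 * P]
     | (F != 0) && (top_level F < n)%N].

Lemma mem_subfns F : F \in subfns = [&& F != 0, (top_level F < n)%N &
  F \in [seq normalize (restrict j.1 j.2 M) | j : 'I_n.+1 * P]].
Proof. by rewrite mem_filter andbA. Qed.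

Definition cnode := seq_sub subfns.

Lemma cnode_top_lt (v : cnode) : (top_level (ssval v) < n)%N.
Proof. by have := ssvalP v; rewrite mem_subfns => /and3P[]. Qed.

Definition cind (v : cnode) : 'I_n := Ordinal (cnode_top_lt v).

Definition cchild (v : cnode) (k : 'I_4) : Fn := cofactor (cind v) k (ssval v).

Definition cedge F : option cnode :=
  if nfactor F == 0 then None else insub (normalize F).

Definition canon : qmdd n C :=
  @Qmdd n C cnode cind (fun v k => cedge (cchild v k)) (fun v k => nfactor (cchild v k))
    (cedge M) (nfactor M).

Lemma cnodeP (v : cnode) : [/\ ssval v != 0, nfactor (ssval v) = 1,
  indep_lt (cind v) (ssval v) &
  exists j : 'I_n.+1, exists2 p0, (j <= cind v)%N & ssval v = normalize (restrict j p0 M)].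
Proof.
have := ssvalP v; rewrite mem_subfns => /and3P[v_neq0 _ /imageP[[j p0] _ v_eq]].
have R_neq0 : restrict j p0 M != 0 by rewrite -normalize_eq0 -v_eq.
split=> //; first by rewrite v_eq nfactor_normalize.
  exact: indep_lt_top_level.
exists j, p0 => //; apply: leq_top_level; first by rewrite -ltnS.
by rewrite v_eq indep_ltZ ?indep_lt_restrict.
Qed.

Lemma cnode_restrict (v : cnode) : exists p0,
  restrict (cind v) p0 M != 0 /\ ssval v = normalize (restrict (cind v) p0 M).
Proof.
have [v_neq0 _ indep_v [j [p0 le_jv v_eq]]] := cnodeP v.
have indep_R : indep_lt (cind v) (restrict j p0 M).
  by rewrite -(normalizeK (restrict j p0 M)) -v_eq indep_ltZ.
by exists p0; rewrite -(restrict_widen le_jv indep_R) -v_eq -normalize_eq0 -v_eq.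
Qed.

Lemma cchild_restrict (v : cnode) k :
  exists j : 'I_n.+1, exists p0, normalize (cchild v k) = normalize (restrict j p0 M).
Proof.
have [p0 [R_neq0 v_eq]] := cnode_restrict v.
exists (lift ord0 (cind v)).
exists (set_bit (cind v) (2 <= k)%N p0.1, set_bit (cind v) (odd k) p0.2).
rewrite lift0 -cofactor_restrict /cchild v_eq cofactorZ normalizeZ //.
by rewrite invr_eq0 nfactor_eq0.
Qed.

Local Notation cfn := (@qfn canon).

Lemma cedge_Some G u : cedge G = Some u -> ssval u = normalize G.
Proof. by rewrite /cedge; case: eqP => // _; case: insubP => // u' _ <- [<-]. Qed.

Lemma cedge_child_lt (v : cnode) k (u : cnode) :
  cedge (cchild v k) = Some u -> (cind v < cind u)%N.
Proof.
move/cedge_Some => u_eq; have [_ _ indep_v _] := cnodeP v; rewrite /= u_eq.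
apply: leq_top_level; first exact: cnode_top_lt.
exact: indep_ltZ (indep_lt_cofactor k indep_v).
Qed.

Lemma canon_mono : qmono canon.
Proof.
move=> v k /=; case E: (cedge _) => [u|]; [exact: cedge_child_lt E | exact: cnode_top_lt].
Qed.

Lemma cedge_qfn G :
  (exists j : 'I_n.+1, exists p0, normalize G = normalize (restrict j p0 M)) ->
  (forall u, cedge G = Some u -> cfn (Some u) = ssval u) ->
  nfactor G *: cfn (cedge G) = G.
Proof.
move=> [j [p0 G_eq]] qfn_u; case E: (cedge G) => [u|].
  by rewrite qfn_u // (cedge_Some E) normalizeK.
move: E; rewrite /cedge; case: eqP => [nf0 _|/eqP nf_neq0].
  by rewrite nf0 scale0r; apply/esym/eqP; rewrite -nfactor_eq0 nf0.
case: insubP => // /negP not_node _.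
have G_neq0 : G != 0 by rewrite -nfactor_eq0.
have top_n : top_level (normalize G) = n.
  apply/eqP; rewrite eqn_leq top_level_le leqNgt; apply/negP => lt_n; apply: not_node.
  by rewrite mem_subfns normalize_eq0 G_neq0 lt_n G_eq; apply/imageP; exists (j, p0).
have /indep_ltP const_G := indep_lt_top_level (normalize G); rewrite top_n in const_G.
have normalizeG1 p : normalize G p = 1.
  have [q nf_q] := nfactor_from_attained 0 n (normalize G).
  rewrite -(nfactor_normalize G_neq0) /nfactor nf_q; apply: const_G => k.
  by rewrite leqNgt ltn_ord.
apply/ffunP => p.
by rewrite [LHS]ffunE qfn_None -[in RHS](normalizeK G) [RHS]ffunE normalizeG1.
Qed.

Lemma qfn_canon (v : cnode) : cfn (Some v) = ssval v.
Proof.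
suff qfn_o (o : option cnode) u : o = Some u -> cfn (Some u) = ssval u by exact: qfn_o.
elim/(qnode_ind canon_mono): o u => // v' IHv u [<-]; apply/ffunP => p.
rewrite (qfn_Some canon_mono) -[RHS](cofactor_blk (cind v') (ssval v') p) -/(cchild v' _).
set k := blk _ _; have /ffunP/(_ p) := cedge_qfn (cchild_restrict v' k) (IHv k).
by rewrite ffunE => <-.
Qed.

Lemma canon_root : nfactor M *: cfn (cedge M) = M.
Proof.
apply: cedge_qfn => [|u _]; last exact: qfn_canon.
by exists ord0, pzero; rewrite restrict0.
Qed.

Lemma canon_good : qgood canon.
Proof.
have qfn_succ (v : cnode) k :
    cofactor (cind v) k (ssval v) = nfactor (cchild v k) *: cfn (cedge (cchild v k)).
  by rewrite -qfn_canon (cofactor_qfn canon_mono).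
split.
- exact: canon_mono.
- by move=> v k /= nf0; rewrite /cedge nf0 eqxx.
- split=> [u v /= eq_ind eq_succ|v /= eq_succ].
    apply/val_inj/(eq_cofactors (i := cind u)) => k.
    by rewrite qfn_succ; case: (eq_succ k) => -> ->; rewrite -qfn_succ eq_ind.
  have [_ _ indep_v _] := cnodeP v.
  suff /(leq_top_level (ltn_ord (cind v))) : indep_lt (cind v).+1 (ssval v) by rewrite ltnn.
  apply: (cofactors_const_indep indep_v) => k.
  by rewrite !qfn_succ; case: (eq_succ k) => -> ->.
- move=> v; apply: argmax_normalized; have [_ v1 indep_v _] := cnodeP v.
  by rewrite (nfactor_cofactor indep_v) in v1.
Qed.

Lemma canon_wf : qmdd_wf canon.
Proof.
have [canon_mono canon_zero _ _] := canon_good.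
split=> //; last by move=> /= nf0; rewrite /cedge nf0 eqxx.
move=> v; have [p0 [R_neq0 v_eq]] := cnode_restrict v.
have [o [w [_ reach_o restr_o]]] :=
  restrict_qfn canon_mono (cedge M) p0 (ltnW (ltn_ord (cind v))).
have eq_scaled :
    nfactor (restrict (cind v) p0 M) *: cfn (Some v) = (nfactor M * w) *: cfn o.
  by rewrite qfn_canon v_eq normalizeK -scalerA -restr_o -restrictZ canon_root.
have eq_w :=
  eq_scale_nfactor1 (nfactor_qfn canon_good _) (nfactor_qfn canon_good _) eq_scaled.
have nf_neq0 : nfactor (restrict (cind v) p0 M) != 0 by rewrite nfactor_eq0.
apply: reach_o; apply: (qfn_inj canon_good); apply: (scalerI nf_neq0).
by rewrite eq_scaled eq_w.
Qed.

End Construction.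

Definition mx_fn (A : 'M[C]_(2 ^ n)) : Fn :=
  [ffun p : P => A (idx_of_bits p.1) (idx_of_bits p.2)].

Lemma mx_fn_inj : injective mx_fn.
Proof.
have bitsK (i : 'I_(2 ^ n)) : idx_of_bits [ffun k => bits_of i k] = i.
  by rewrite -[RHS]idx_of_bitsK; apply: eq_idx_of_bits => k; rewrite ffunE.
move=> A B /ffunP eq_AB; apply/matrixP => i j.
by have := eq_AB ([ffun k => bits_of i k], [ffun k => bits_of j k]); rewrite !ffunE !bitsK.
Qed.

Lemma mx_fn_qsem (Q : qmdd n C) : mx_fn (qsem Q) = qrootw Q *: qfn (qroot Q).
Proof.
apply/ffunP => p; rewrite !ffunE mxE; congr (_ * _).
by apply: eq_qval => k; rewrite bits_of_idx.
Qed.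

End Qmdd.

Theorem theorem3p7 (R : realType) (n : nat) (hn : (1 <= n)%N)
  (pi : 'I_n -> {set 'I_n}) (hpi : lin_trans pi)
  (U : 'M[R[i]]_(2 ^ n)) (hU : unitary_mx U) :
  (exists Q : qmdd n R[i],
     [/\ qmdd_wf Q, qreduced Q, qnormalized Q & ltsem Q pi = U]) /\
  (forall Q1 Q2 : qmdd n R[i],
     qmdd_wf Q1 -> qreduced Q1 -> qnormalized Q1 -> ltsem Q1 pi = U ->
     qmdd_wf Q2 -> qreduced Q2 -> qnormalized Q2 -> ltsem Q2 pi = U ->
     qiso Q1 Q2).
Proof.
have [U' ltU'] := lt_mx_surj hpi U.
have ltsemE Q : ltsem Q pi = U <-> qrootw Q *: qfn (qroot Q) = mx_fn U'.
  rewrite /ltsem -ltU' -mx_fn_qsem.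
  by split=> [/(lt_mx_inj hpi) -> | /mx_fn_inj ->].
split.
  have [_ _ red norm] := canon_good (mx_fn U').
  by exists (canon (mx_fn U')); split; rewrite ?ltsemE ?canon_root //; apply: canon_wf.
move=> Q1 Q2 wf1 red1 norm1 /ltsemE eq1 wf2 red2 norm2 /ltsemE eq2.
by apply: qiso_of_eq_qfn; rewrite ?eq1 ?eq2 //; apply: qmdd_wf_good.
Qed.
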